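(* Let $\mathscr Q_n$ be a non-singular quadric in $\mathrm{PG}(n,2)$ of projective index $g\ge 1$, let $0\le s<g$, let $\alpha_s$ be an $s$-dimensional subspace contained in $\mathscr Q_n$, and let $\Gamma_s$ be the graph constructed from $\alpha_s$ as described below. Then for distinct vertices $X,Y$ of $\Gamma_s$: if one of $X,Y$ has type (ii) and the other has type (iii), then $X,Y$ are adjacent in $\Gamma_s$ if and only if the line $XY$ is not contained in $\mathscr Q_n$ (i.e. it is a 2-secant of $\mathscr Q_n$); otherwise $X,Y$ are adjacent in $\Gamma_s$ if and only if the line $XY$ is contained in $\mathscr Q_n$. In particular, two type (i) vertices are always adjacent, and a type (i) vertex is always adjacent to a type (ii) vertex.
   Context: A non-singular quadric $\mathscr Q_n$ in $\mathrm{PG}(n,2)$ is the point set of a non-degenerate quadric; its projective index $g$ is the largest dimension of a projective subspace contained in $\mathscr Q_n$. The point-graph $\Gamma$ has vertex set the points of $\mathscr Q_n$, two distinct points adjacent iff the line joining them is contained in $\mathscr Q_n$. A point $X$ of $\mathscr Q_n$ has type (i) if $X\in\alpha_s$; type (ii) if $X\notin\alpha_s$ and $\langle\alpha_s,X\rangle\subseteq\mathscr Q_n$; type (iii) otherwise. Let $\mathcal X_s$ be the type (ii) points and $\mathcal Y_s$ the points of type (i) or (iii). The graph $\Gamma_s$ has the same vertex set as $\Gamma$ and the same edges, except that for each vertex $R\in\mathcal Y_s$ having exactly $\frac12|\mathcal X_s|$ neighbours in $\mathcal X_s$ (in $\Gamma$), those edges are deleted and $R$ is joined instead to the other $\frac12|\mathcal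 X_s|$ vertices of $\mathcal X_s$. A 2-secant is a line meeting $\mathscr Q_n$ in exactly two points. *)

(* points of PG(n,2) are nonzero row vectors in 'F_2^(n+1). *)
From mathcomp Require Import all_boot all_order all_algebra all_fingroup.
Set Implicit Arguments. Unset Strict Implicit. Unset Printing Implicit Defensive.
Import GRing.Theory.
Local Open Scope ring_scope.

Section Quadric.
Variable n : nat.
Notation vec := 'rV['F_2]_(n.+1).

(* Quadratic form Q(x) = x A x^T (every quadratic form over F_2 arises so). *)
Definition qf (A : 'M['F_2]_(n.+1)) (x : vec) : 'F_2 := (x *m A *m x^T) 0 0.

(* Associated polar (bilinear) form B(x,y) = Q(x+y) - Q(x) - Q(y). *)
Definition polar (A : 'M['F_2]_(n.+1)) (x y : vec) : 'F_2 :=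
  (x *m (A + A^T) *m y^T) 0 0.

Definition nonsingular (A : 'M['F_2]_(n.+1)) : Prop :=
  forall v : vec, v != 0 -> qf A v = 0 -> exists w : vec, polar A v w != 0.

(* The row space of U is contained in the quadric (a projective subspace
   of projective dimension \rank U - 1 lying on Q). *)
Definition tsing (A : 'M['F_2]_(n.+1)) m (U : 'M['F_2]_(m, n.+1)) : bool :=
  [forall v : vec, (v <= U)%MS ==> (qf A v == 0)].

Definition proj_index (A : 'M['F_2]_(n.+1)) (g : nat) : Prop :=
  (exists U : 'M['F_2]_(n.+1), tsing A U /\ \rank U = g.+1) /\
  (forall U : 'M['F_2]_(n.+1), tsing A U -> (\rank U <= g.+1)%N).

Definition qpoints (A : 'M['F_2]_(n.+1)) : {set vec} :=
  [set x : vec | (x != 0) && (qf A x == 0)].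

Definition line_in (A : 'M['F_2]_(n.+1)) (x y : vec) : bool := tsing A (col_mx x y).

Definition adj (A : 'M['F_2]_(n.+1)) (x y : vec) : bool := (x != y) && line_in A x y.

(* Types of points relative to alpha_s (the row space of U). *)
Definition type1 (U : 'M['F_2]_(n.+1)) (x : vec) : bool := (x <= U)%MS.
Definition type2 (A U : 'M['F_2]_(n.+1)) (x : vec) : bool :=
  ~~ (x <= U)%MS && tsing A (col_mx U x).
Definition type3 (A U : 'M['F_2]_(n.+1)) (x : vec) : bool :=
  ~~ type1 U x && ~~ type2 A U x.

Definition Xs (A U : 'M['F_2]_(n.+1)) : {set vec} :=
  [set x in qpoints A | type2 A U x].
Definition Ys (A U : 'M['F_2]_(n.+1)) : {set vec} := qpoints A :\: Xs A U.

Definition switched (A U : 'M['F_2]_(n.+1)) (r : vec) : bool :=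
  (r \in Ys A U) &&
  (2 * #|[set x in Xs A U | adj A r x]| == #|Xs A U|)%N.

Definition adj_s (A U : 'M['F_2]_(n.+1)) (x y : vec) : bool :=
  if ((x \in Xs A U) && switched A U y) || ((y \in Xs A U) && switched A U x)
  then (x != y) && ~~ adj A x y
  else adj A x y.

End Quadric.

From mathcomp Require Import all_boot all_order all_algebra all_fingroup.
From mathcomp Require Import ring zify.
Import GRing.Theory.
Local Open Scope ring_scope.
Set Implicit Arguments. Unset Strict Implicit.

(* Gamma_s differs from Gamma only on edges between switched vertices and X_s,
   so everything reduces to: the switched vertices are exactly the points of
   type (iii).  A type (iii) point r has some w in alpha_s with B(r,w) = 1;
   translation by w permutes X_s and exchanges the neighbours and
   non-neighbours of r there, so r sees exactly half of X_s.  A type (i) point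
   is collinear with all of X_s, which is nonempty because s < g: by
   rank-nullity, a totally singular subspace of dimension g meets alpha_s^perp
   in more than s+1 dimensions, hence outside alpha_s. *)

Lemma card_half_of_flip (T : finType) (S : {set T}) (P : pred T) (f : T -> T) :
    injective f -> {in S, forall x, f x \in S} ->
    {in S, forall x, P (f x) = ~~ P x} ->
  (2 * #|[set x in S | P x]| = #|S|)%N.
Proof.
move=> f_inj fS fP.
have flip_le (b : bool) :
    (#|[set x in S | P x == b]| <= #|[set x in S | P x == ~~ b]|)%N.
  rewrite -(card_imset _ f_inj); apply/subset_leq_card/subsetP => y /imsetP [x].
  by rewrite !inE => /andP [xS /eqP Px] ->; rewrite fS // fP // Px eqxx.
have /= := flip_le true; have /= := flip_le false.
have -> : [set x in S | P x == true] = S :&: [set x | P x].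
  by apply/setP => x; rewrite !inE eqb_id.
have -> : [set x in S | P x == false] = S :\: [set x | P x].
  by apply/setP => x; rewrite !inE eqbF_neg andbC.
rewrite setIdE -[in RHS](cardsID [set x | P x] S); lia.
Qed.

Lemma rank_isotropic_outside (F : fieldType) (m p q : nat) (M : 'M[F]_m)
    (U : 'M[F]_(p, m)) (V : 'M[F]_(q, m)) :
    M^T = M -> V *m M *m V^T = 0 -> (\rank U < \rank V)%N ->
  exists2 x : 'rV[F]_m, (x <= V)%MS & (x *m M *m U^T == 0) && ~~ (x <= U)%MS.
Proof.
move=> MT VMV rUV; set K := (V :&: kermx (M *m U^T))%MS.
have KV : (K <= V)%MS by apply: capmxSl.
suff /row_subPn [i notUi] : ~~ (K <= U)%MS.
  exists (row i K); first exact: submx_trans (row_sub i K) KV.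
  rewrite notUi andbT -mulmxA; apply/eqP/sub_kermxP.
  exact: submx_trans (row_sub i K) (capmxSr _ _).
apply: contraL rUV => KU; rewrite -leqNgt.
have KkerV : (K <= kermx (M *m V^T))%MS.
  apply/sub_kermxP; case/submxP: KV => D ->.
  by rewrite -mulmxA [V *m _]mulmxA VMV mulmx0.
have rank_swap : \rank (V *m (M *m U^T)) = \rank (U *m (M *m V^T)).
  by rewrite -mxrank_tr !trmx_mul trmxK MT mulmxA.
rewrite -(mxrank_mul_ker V (M *m U^T)) -(mxrank_mul_ker U (M *m V^T)) rank_swap.
by rewrite leq_add2l mxrankS // sub_capmx KU.
Qed.

Lemma F2_cases (a : 'F_2) : a = 0 \/ a = 1.
Proof. by case: a => [[|[|k]] ?]; [left|right|]; try apply: val_inj. Qed.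

Lemma mxD_entry (R : nmodType) m p (P Q : 'M[R]_(m, p)) i j :
  (P + Q) i j = P i j + Q i j.
Proof. by rewrite mxE. Qed.

Section QuadraticForm.
Variables (n : nat) (A : 'M['F_2]_(n.+1)).
Notation vec := 'rV['F_2]_(n.+1).

Lemma form_trmx (B : 'M['F_2]_(n.+1)) (x y : vec) :
  (x *m B^T *m y^T) 0 0 = (y *m B *m x^T) 0 0.
Proof.
have -> : x *m B^T *m y^T = (y *m B *m x^T)^T by rewrite !trmx_mul trmxK mulmxA.
by rewrite mxE.
Qed.

Lemma qfD (x y : vec) : qf A (x + y) = qf A x + qf A y + polar A x y.
Proof.
by rewrite /qf /polar linearD /= !(mulmxDl, mulmxDr) !mxD_entry form_trmx; ring.
Qed.

Lemma qfZ (a : 'F_2) (x : vec) : qf A (a *: x) = a ^+ 2 * qf A x.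
Proof. by rewrite /qf linearZ /= -!scalemxAl -scalemxAr !mxE mulrA expr2. Qed.

Lemma polarC (x y : vec) : polar A x y = polar A y x.
Proof. by rewrite /polar !(mulmxDl, mulmxDr) !mxD_entry !form_trmx addrC. Qed.

Lemma polarDr (x y z : vec) : polar A x (y + z) = polar A x y + polar A x z.
Proof. by rewrite /polar [(y + z)^T]linearD /= mulmxDr mxD_entry. Qed.

Lemma polarZl (a : 'F_2) (x y : vec) : polar A (a *: x) y = a * polar A x y.
Proof. by rewrite /polar -!scalemxAl mxE. Qed.

Lemma tsing_row (x : vec) : tsing A x = (qf A x == 0).
Proof.
apply/forallP/idP => [/(_ x)|/eqP qx v]; first by rewrite submx_refl.
by apply/implyP => /sub_rVP [a ->]; rewrite qfZ qx mulr0.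
Qed.

Lemma tsingS m1 m2 (U : 'M['F_2]_(m1, n.+1)) (V : 'M['F_2]_(m2, n.+1)) :
  (V <= U)%MS -> tsing A U -> tsing A V.
Proof.
move=> VU /forallP tsU; apply/forallP => v; apply/implyP => vV.
by have := tsU v; rewrite (submx_trans vV VU).
Qed.

Lemma tsing_polar m (U : 'M['F_2]_(m, n.+1)) (u v : vec) :
  tsing A U -> (u <= U)%MS -> (v <= U)%MS -> polar A u v = 0.
Proof.
move=> /forallP tsU uU vU.
have /eqP qu := implyP (tsU u) uU; have /eqP qv := implyP (tsU v) vU.
by have /eqP := implyP (tsU (u + v)) (addmx_sub uU vU); rewrite qfD qu qv !add0r.
Qed.

Lemma tsing_col_mx m (U : 'M['F_2]_(m, n.+1)) (x : vec) :
  tsing A (col_mx U x) =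
  [&& tsing A U, qf A x == 0 & [forall u : vec, (u <= U)%MS ==> (polar A u x == 0)]].
Proof.
have Ux : (U <= col_mx U x)%MS by rewrite -addsmxE addsmxSl.
have xUx : (x <= col_mx U x)%MS by rewrite -addsmxE addsmxSr.
apply/idP/idP.
  move=> ts; rewrite (tsingS Ux ts) -tsing_row (tsingS xUx ts).
  apply/forallP => u; apply/implyP => uU; apply/eqP.
  exact: (tsing_polar ts (submx_trans uU Ux) xUx).
case/and3P => /forallP tsU /eqP qx /forallP ortho; apply/forallP => v; apply/implyP.
rewrite -addsmxE; case/sub_addsmxP => [[u1 u2] /= ->]; have u1U := submxMl u1 U.
have /eqP qu := implyP (tsU (u1 *m U)) u1U.
have /eqP pux := implyP (ortho (u1 *m U)) u1U.
have -> : u2 *m x = u2 0 0 *: x by apply/rowP => j; rewrite !mxE big_ord1.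
by case: (F2_cases (u2 0 0)) => ->;
  rewrite ?scale0r ?addr0 ?scale1r ?qu // qfD qu qx pux !addr0.
Qed.

Lemma line_inE (x y : vec) : qf A x = 0 -> qf A y = 0 ->
  line_in A x y = (polar A x y == 0).
Proof.
move=> qx qy; rewrite /line_in tsing_col_mx tsing_row qx qy eqxx /=.
apply/forallP/eqP => [/(_ x)|pxy u]; first by rewrite submx_refl => /eqP.
by apply/implyP => /sub_rVP [a ->]; rewrite polarZl pxy mulr0.
Qed.

Variable U : 'M['F_2]_(n.+1).
Hypothesis tsU : tsing A U.

Lemma in_XsE (x : vec) :
  (x \in Xs A U) = [&& x != 0, qf A x == 0, ~~ (x <= U)%MS &
     [forall u : vec, (u <= U)%MS ==> (polar A u x == 0)]].
Proof.
rewrite /Xs /qpoints !inE /type2 tsing_col_mx tsU /=.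
by case: (x != 0); case: (qf A x == 0); case: (x <= U)%MS.
Qed.

Lemma in_Xs_type2 (x : vec) : x \in qpoints A -> (x \in Xs A U) = type2 A U x.
Proof. by move=> xQ; rewrite /Xs in_set xQ. Qed.

Lemma Xs_neq0 (g : nat) : proj_index A g -> (\rank U < g.+1)%N -> Xs A U != set0.
Proof.
case=> [[V [tsV <-]] _] rUV; set M := A + A^T.
have MT : M^T = M by rewrite linearD /= trmxK addrC.
have VMV : V *m M *m V^T = 0.
  apply/matrixP => i j; rewrite [RHS]mxE -(tsing_polar tsV (row_sub i V) (row_sub j V)).
  by rewrite /polar -row_mul !mxE; apply: eq_bigr => k _; rewrite !mxE.
have [x xV /andP [/eqP xMU notxU]] := rank_isotropic_outside MT VMV rUV.
apply/set0Pn; exists x; rewrite in_XsE notxU -tsing_row (tsingS xV tsV) /=.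
apply/andP; split; first by apply: contraNneq notxU => ->; rewrite sub0mx.
apply/forallP => u; apply/implyP => /submxP [D ->].
by rewrite polarC /polar trmx_mul mulmxA xMU mul0mx mxE.
Qed.

Lemma type3_polar_witness (r : vec) : r \in qpoints A -> type3 A U r ->
  exists2 w, (w <= U)%MS & polar A r w = 1.
Proof.
rewrite inE => /andP [_ qr] /andP [notUr].
rewrite /type2 notUr tsing_col_mx tsU qr /= negb_forall.
case/existsP => w; rewrite negb_imply => /andP [wU pwr]; exists w => //.
by rewrite polarC; case: (F2_cases (polar A w r)) pwr => ->.
Qed.

Lemma Xs_addr (w x : vec) : (w <= U)%MS -> x \in Xs A U -> x + w \in Xs A U.
Proof.
move=> wU; rewrite !in_XsE => /and4P [_ /eqP qx notxU /forallP ortho].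
have notxwU : ~~ ((x + w)%R <= U)%MS.
  by apply: contra notxU => xwU; rewrite -(addrK w x) addmx_sub // eqmx_opp //.
have /eqP pwx := implyP (ortho w) wU.
have /eqP qw := implyP (elimT forallP tsU w) wU.
rewrite notxwU qfD qx qw polarC pwx !addr0 eqxx /=.
apply/andP; split; first by apply: contraNneq notxwU => ->; rewrite sub0mx.
apply/forallP => u; apply/implyP => uU; rewrite polarDr (tsing_polar tsU uU wU).
by rewrite addr0; apply: implyP uU.
Qed.

Lemma switched_type3 (r : vec) : r \in qpoints A -> type3 A U r -> switched A U r.
Proof.
move=> rQ r3; have [w wU prw] := type3_polar_witness rQ r3.
have rX : r \notin Xs A U by rewrite in_Xs_type2 //; case/andP: r3.
have qr : qf A r = 0 by move: rQ; rewrite inE => /andP [_ /eqP].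
have qX x : x \in Xs A U -> qf A x = 0 by rewrite in_XsE => /and4P [_ /eqP].
have neqX x : x \in Xs A U -> r != x by move=> xX; apply: contraNneq rX => ->.
rewrite /switched in_setD rX rQ /= (card_half_of_flip (addIr w)) //.
  by move=> x; apply: Xs_addr.
move=> x xX; have xwX := Xs_addr wU xX.
rewrite /adj !neqX //= (line_inE qr (qX _ xX)) (line_inE qr (qX _ xwX)) polarDr prw.
by case: (F2_cases (polar A r x)) => ->.
Qed.

Lemma type1_not_switched (r : vec) : Xs A U != set0 -> type1 U r -> ~~ switched A U r.
Proof.
move=> /set0Pn [x0 x0X]; rewrite /type1 /switched negb_and => rU; apply/orP; right.
have qr : qf A r = 0 by apply/eqP; move/forallP: tsU => /(_ r); rewrite rU.
have -> : [set x in Xs A U | adj A r x] = Xs A U.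
  apply/setP => x; rewrite inE; case xX: (x \in Xs A U) => //=.
  move: xX; rewrite in_XsE => /and4P [_ /eqP qx notxU /forallP ortho].
  rewrite /adj line_inE //; apply/andP; split; first by apply: contraNneq notxU => <-.
  exact: implyP (ortho r) rU.
have : (0 < #|Xs A U|)%N by apply/card_gt0P; exists x0.
by move=> Xs_gt0; apply/eqP; lia.
Qed.

Lemma switchedE (r : vec) : Xs A U != set0 -> r \in qpoints A ->
  switched A U r = type3 A U r.
Proof.
move=> XsN0 rQ; case r1: (type1 U r).
  by rewrite /type3 r1 /=; apply/negbTE/type1_not_switched.
case r2: (type2 A U r).
  by rewrite /type3 r2 andbF /switched in_setD in_Xs_type2 // r2.
have r3 : type3 A U r by rewrite /type3 r1 r2.
by rewrite r3; apply: switched_type3.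
Qed.

End QuadraticForm.

Theorem corollary4p5 (n : nat) (A : 'M['F_2]_(n.+1)) (g s : nat)
    (U : 'M['F_2]_(n.+1)) :
  nonsingular A -> proj_index A g -> (1 <= g)%N -> (s < g)%N ->
  \rank U = s.+1 -> tsing A U ->
  forall x y : 'rV['F_2]_(n.+1),
    x \in qpoints A -> y \in qpoints A -> x != y ->
    (((type2 A U x && type3 A U y) || (type2 A U y && type3 A U x)) ->
       adj_s A U x y = ~~ line_in A x y) /\
    (~~ ((type2 A U x && type3 A U y) || (type2 A U y && type3 A U x)) ->
       adj_s A U x y = line_in A x y) /\
    (type1 U x -> type1 U y -> adj_s A U x y) /\
    (type1 U x -> type2 A U y -> adj_s A U x y).
Proof.
move=> _ pi _ sg rU tsU x y xQ yQ xy.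
have rUg : (\rank U < g.+1)%N by rewrite rU.
have XsN0 := Xs_neq0 tsU pi rUg.
have type1_not2 z : type1 U z -> type2 A U z = false by rewrite /type2 /type1 => ->.
have type1_not3 z : type1 U z -> type3 A U z = false by rewrite /type3 => ->.
rewrite /adj_s !in_Xs_type2 // !switchedE // /adj xy /=.
split; first by move=> ->.
split; first by move/negbTE => ->.
split=> [x1 y1|x1 /andP [_ tsUy]].
  rewrite !type1_not2 // !type1_not3 //; apply: tsingS tsU.
  by rewrite -addsmxE addsmx_sub; apply/andP.
rewrite (type1_not2 x x1) (type1_not3 x x1) andbF orbF; apply: tsingS tsUy.
by rewrite -!addsmxE addsmxS.
Qed.
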